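(* The lifts $\Delta_C$ of the strongly connected components $C$ of $G$ are Morse sets for the flow $\psi$ on $\Delta$; that is, the collection $\{\Delta_C : C \text{ a strongly connected component of } G\}$ consists of non-void, pairwise disjoint, invariant, isolated, compact sets and there are no cycles between them (so that it is a Morse decomposition of $(\Delta,\psi)$).
   Context: $G$ is a finite directed graph (loops allowed) with vertex set $V$. $\Omega$ is the set of bi-infinite paths in $G$, i.e. sequences $(x_i)_{i\in\mathbb Z}\in V^{\mathbb Z}$ such that for every $i$ there is an edge from $x_i$ to $x_{i+1}$. Fix $h>0$. $\bar\Delta$ is the set of functions $x:\mathbb R\to V$ that are constant on each interval $[nh,(n+1)h)$, $n\in\mathbb Z$, and satisfy $(x(ih))_{i\in\mathbb Z}\in\Omega$. $\Delta=\{x(\cdot+t): x\in\bar\Delta,\ t\in\mathbb R\}$, with metric $d(x,y)=\sum_{i\in\mathbb Z}4^{-|i|}\frac1h\int_{ih}^{(i+1)h}\delta(x,y,t)\,dt$, where $\delta(x,y,t)=1$ if $x(t)\ne y(t)$ and $0$ otherwise. The flow $\psi:\mathbb R\times\Delta\to\Delta$ is $\psi(t,x)=x(\cdot+t)$. A strongly connected component of $G$ is a maximal nonempty set $C\subseteq V$ such that for all $u,v\in C$ (including $u=v$) there is a directed path of positive length from $u$ to $v$ with all vertices in $C$. The lift of $C$ is $\Delta_C=\{f\in\Delta: f(t)\in C \text{ for all } t\in\mathbb R\}$. For $x\in\Delta$, $\omega(x)$ (resp. $\alpha(x)$) is the set of limits of $\psi(t_k,x)$ along sequences $t_k\to+\infty$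 (resp. $t_k\to-\infty$). A set $K$ is invariant if $\psi(t,K)\subseteq K$ for all $t\in\mathbb R$; isolated if there is a neighborhood $N$ of $K$ with $K\subset\operatorname{int}N$ such that $\psi(t,x)\in N$ for all $t\in\mathbb R$ implies $x\in K$. A Morse decomposition is a finite collection $\{\mathcal M_1,\dots,\mathcal M_n\}$ of non-void, pairwise disjoint, invariant, isolated, compact sets such that (1) $\omega(x),\alpha(x)\subseteq\bigcup_i\mathcal M_i$ for every $x$, and (2) (no cycles) if there are Morse sets $\mathcal M_{j_0},\dots,\mathcal M_{j_l}$ and points $x_1,\dots,x_l\notin\bigcup_i\mathcal M_i$ with $\alpha(x_m)\subseteq\mathcal M_{j_{m-1}}$ and $\omega(x_m)\subseteq\mathcal M_{j_m}$ for $m=1,\dots,l$, then $\mathcal M_{j_0}\ne\mathcal M_{j_l}$. *)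

From mathcomp Require Import all_boot.
From Stdlib Require Import Reals ClassicalEpsilon.
Set Implicit Arguments. Unset Strict Implicit. Unset Printing Implicit Defensive.

Open Scope R_scope.

Section Defs.
Variables (V : finType) (E : rel V) (h : R).

Definition InOmega (x : Z -> V) : Prop := forall i : Z, E (x i) (x (i + 1)%Z).

Definition InDeltaBar (x : R -> V) : Prop :=
  (forall (n : Z) (s : R), IZR n * h <= s < (IZR n + 1) * h -> x s = x (IZR n * h)) /\
  InOmega (fun i : Z => x (IZR i * h)).

Definition InDelta (x : R -> V) : Prop :=
  exists (xb : R -> V) (t : R), InDeltaBar xb /\ x = (fun s => xb (s + t)).

Definition psi (t : R) (x : R -> V) : R -> V := fun s => x (s + t).

(** Riemann integral of f over [a,b] (0 if not integrable; the value does
    not depend on the integrability proof, RiemannInt_P5). *)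
Definition Rint (f : R -> R) (a b : R) : R :=
  epsilon (inhabits 0) (fun l => exists pr : Riemann_integrable f a b, RiemannInt pr = l).

Definition delta (x y : R -> V) (t : R) : R := if x t == y t then 0 else 1.

Definition dterm (x y : R -> V) (i : Z) : R :=
  / h * Rint (delta x y) (IZR i * h) ((IZR i + 1) * h).

(** Terms of the sum over Z grouped as i = 0 and i = +-(k+1). *)
Definition dseries (x y : R -> V) (n : nat) : R :=
  match n with
  | O => dterm x y 0
  | S k => (/ 4) ^ n * (dterm x y (Z.of_nat n) + dterm x y (- Z.of_nat n))
  end.

(** d(x,y) = sum_{i in Z} 4^{-|i|} (1/h) int_{ih}^{(i+1)h} delta(x,y,t) dt. *)
Definition d (x y : R -> V) : R :=
  epsilon (inhabits 0) (fun l => infinite_sum (dseries x y) l).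

Definition omega_lim (x : R -> V) : (R -> V) -> Prop := fun y =>
  InDelta y /\ exists tk : nat -> R, cv_infty tk /\ Un_cv (fun k => d (psi (tk k) x) y) 0.

Definition alpha_lim (x : R -> V) : (R -> V) -> Prop := fun y =>
  InDelta y /\ exists tk : nat -> R, cv_infty (fun k => - tk k) /\
    Un_cv (fun k => d (psi (tk k) x) y) 0.

Definition open_in_Delta (U : (R -> V) -> Prop) : Prop :=
  forall f, U f -> InDelta f /\
    exists eps, 0 < eps /\ forall g, InDelta g -> d f g < eps -> U g.

Definition compact_in_Delta (K : (R -> V) -> Prop) : Prop :=
  (forall f, K f -> InDelta f) /\
  forall (I : Type) (U : I -> (R -> V) -> Prop),
    (forall i, open_in_Delta (U i)) ->
    (forall f, K f -> exists i, U i f) ->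
    exists l : list I, forall f, K f -> exists i, List.In i l /\ U i f.

Definition invariant (K : (R -> V) -> Prop) : Prop :=
  forall t f, K f -> K (psi t f).

Definition isolated (K : (R -> V) -> Prop) : Prop :=
  exists N : (R -> V) -> Prop,
    (forall f, N f -> InDelta f) /\
    (forall f, K f -> exists eps, 0 < eps /\
        forall g, InDelta g -> d f g < eps -> N g) /\
    (forall x, InDelta x -> (forall t, N (psi t x)) -> K x).

Definition MorseDecomposition (I : finType) (P : I -> Prop)
    (M : I -> (R -> V) -> Prop) : Prop :=
  (forall i, P i -> exists f, M i f) /\
  (forall i j, P i -> P j -> ~ (forall f, M i f <-> M j f) ->
      forall f, ~ (M i f /\ M j f)) /\
  (forall i, P i -> invariant (M i)) /\
  (forall i, P i -> isolated (M i)) /\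
  (forall i, P i -> compact_in_Delta (M i)) /\
  (forall x, InDelta x ->
      (forall y, omega_lim x y -> exists i, P i /\ M i y) /\
      (forall y, alpha_lim x y -> exists i, P i /\ M i y)) /\
  (forall (l : nat) (j : nat -> I) (x : nat -> R -> V),
      (1 <= l)%nat ->
      (forall m, (m <= l)%nat -> P (j m)) ->
      (forall m, (1 <= m)%nat -> (m <= l)%nat ->
          InDelta (x m) /\
          (forall i, P i -> ~ M i (x m)) /\
          (forall y, alpha_lim (x m) y -> M (j (m - 1)%nat) y) /\
          (forall y, omega_lim (x m) y -> M (j m) y)) ->
      ~ (forall f, M (j 0%nat) f <-> M (j l) f)).

Definition strongly_conn (C : {set V}) : Prop :=
  forall u v, u \in C -> v \in C ->
    exists (n : nat) (p : nat -> V),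
      (0 < n)%nat /\ p 0%nat = u /\ p n = v /\
      (forall k, (k < n)%nat -> E (p k) (p k.+1)) /\
      (forall k, (k <= n)%nat -> p k \in C).

Definition is_scc (C : {set V}) : Prop :=
  C != set0 /\ strongly_conn C /\
  (forall D : {set V}, C \subset D -> D != set0 -> strongly_conn D -> D = C).

Definition liftC (C : {set V}) : (R -> V) -> Prop :=
  fun f => InDelta f /\ forall t : R, f t \in C.

End Defs.

(* Every element of Delta is a step function [stepf a t] built on a path [a] in
   Omega with phase [t]. Two of them are d-close when their paths agree on a long
   window around 0 and their phases are close, while disagreeing on a whole time
   interval of length h keeps them a definite distance apart. Hence an omega-limit
   (alpha-limit) point of an orbit only takes values that the path visits at
   arbitrarily late (early) times; these values are pairwise reachable in G, so the
   limit point lies in the lift of a single strongly connected component.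
   Conversely, if the omega-limit set lies in the lift of D, every such late value
   lies in D; so an orbit connecting the lift of C to that of D carries a walk from
   C to D in G, and a cycle of connecting orbits would put its first orbit inside the
   lift of one component. Compactness of the lifts comes from a Koenig-type
   bisection on the path and the phase, and isolation from the fact that one time
   step spent outside C costs distance 1. *)

From Pilot Require Import Defs.
From mathcomp Require Import all_boot.
From Stdlib Require Import Reals Lra Lia ZArith ClassicalEpsilon Classical FunctionalExtensionality.
From Coquelicot Require Import Coquelicot.
From mathcomp Require Import zify.

Set Implicit Arguments.
Unset Strict Implicit.
Unset Printing Implicit Defensive.

(** * Strongly connected components *)

Section Graph.
Variables (V : finType) (E : rel V).
Local Open Scope nat_scope.

Lemma fun_path_connect n (p : nat -> V) :
  (forall k, k < n -> E (p k) (p k.+1)) ->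
  forall i j, i <= j <= n -> connect E (p i) (p j).
Proof.
move=> Ep i j /andP[]; elim: j => [|j IHj]; first by rewrite leqn0 => /eqP ->.
rewrite leq_eqVlt => /orP[/eqP -> _|lt_ij lt_jn]; first exact: connect0.
exact: connect_trans (IHj lt_ij (ltnW lt_jn)) (connect1 (Ep j lt_jn)).
Qed.

Definition on_cycle (u : V) : Prop := exists2 w, E u w & connect E w u.

Definition scc_of (u : V) : {set V} := [set v | connect E u v && connect E v u].

Lemma scc_of_refl u : u \in scc_of u.
Proof. by rewrite inE connect0. Qed.

Lemma strongly_conn_step (C : {set V}) u v : strongly_conn E C ->
  u \in C -> v \in C -> exists2 w, E u w & connect E w v.
Proof.
move=> sC Cu Cv; have [n [p [n_gt0 [p0 [pn [Ep _]]]]]] := sC u v Cu Cv.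
exists (p 1); first by rewrite -p0; apply: Ep.
by rewrite -pn (fun_path_connect Ep) // n_gt0 leqnn.
Qed.

Lemma strongly_conn_connect (C : {set V}) u v : strongly_conn E C ->
  u \in C -> v \in C -> connect E u v.
Proof.
by move=> sC Cu Cv; have [w Euw Cwv] := strongly_conn_step sC Cu Cv;
  apply: connect_trans (connect1 Euw) Cwv.
Qed.

(* The path x ~> u -> w ~> y has positive length and stays in [scc_of u]. *)
Lemma strongly_conn_scc_of u : on_cycle u -> strongly_conn E (scc_of u).
Proof.
move=> [w Euw Cwu] x y; rewrite !inE => /andP[Cux Cxu] /andP[Cuy Cyu].
have /connectP[s1 s1P s1_last] := Cxu.
have /connectP[s2 s2P s2_last] := connect_trans Cwu Cuy.
pose s := s1 ++ w :: s2; pose p := nth x (x :: s).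
have sP : path E x s by rewrite /s cat_path s1P -s1_last /= Euw s2P.
have s_last : last x s = y by rewrite /s last_cat -s1_last.
have Ep : forall k, k < size s -> E (p k) (p k.+1) by apply/(pathP x).
have pn : p (size s) = y by rewrite -s_last; apply: (nth_last x (x :: s)).
exists (size s), p; split; first by rewrite size_cat /= addnS.
split=> //; split=> //; split=> // k le_kn.
have Cxp : connect E x (p k) by rewrite -[x]/(p 0) (fun_path_connect Ep) // le_kn.
have Cpy : connect E (p k) y by rewrite -pn (fun_path_connect Ep) // le_kn leqnn.
by rewrite inE (connect_trans Cux Cxp) (connect_trans Cpy Cyu).
Qed.

Lemma is_scc_scc_of u : on_cycle u -> is_scc E (scc_of u).
Proof.
move=> cyc_u; split; first by apply/set0Pn; exists u; apply: scc_of_refl.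
split; first exact: strongly_conn_scc_of.
move=> D sub_uD _ sD; apply/eqP; rewrite eqEsubset sub_uD andbT.
have Du : u \in D by apply: (subsetP sub_uD); apply: scc_of_refl.
by apply/subsetP => z Dz; rewrite inE !(strongly_conn_connect sD).
Qed.

Lemma is_scc_scc_ofE (C : {set V}) u : is_scc E C -> u \in C -> C = scc_of u.
Proof.
move=> [_ [sC maxC]] Cu; have [w Euw Cwu] := strongly_conn_step sC Cu Cu.
symmetry; apply: maxC; last 2 first.
- by apply/set0Pn; exists u; apply: scc_of_refl.
- by apply: strongly_conn_scc_of; exists w.
by apply/subsetP => z Cz; rewrite inE !(strongly_conn_connect sC).
Qed.

Lemma is_scc_connect (C : {set V}) u v : is_scc E C -> u \in C -> v \in C -> connect E u v.
Proof. by move=> [_ [sC _]]; apply: strongly_conn_connect. Qed.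

Lemma is_scc_mem (C : {set V}) u v : is_scc E C -> u \in C ->
  connect E u v -> connect E v u -> v \in C.
Proof. by move=> sccC Cu Cuv Cvu; rewrite (is_scc_scc_ofE sccC Cu) inE Cuv Cvu. Qed.

Lemma is_scc_eq (C D : {set V}) u : is_scc E C -> is_scc E D -> u \in C -> u \in D -> C = D.
Proof. by move=> sccC sccD Cu Du; rewrite (is_scc_scc_ofE sccC Cu) (is_scc_scc_ofE sccD Du). Qed.

End Graph.

(** * Recurrent values of paths *)

Lemma fin_eventually (T : finType) (P : T -> Z -> Prop) :
  (forall v, exists M, forall N, (M <= N)%Z -> P v N) ->
  exists M, forall v N, (M <= N)%Z -> P v N.
Proof.
move=> evP; suff [M PM] : exists M, forall v, v \in enum T -> forall N, (M <= N)%Z -> P v N.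
  by exists M => v; apply: PM; rewrite mem_enum.
elim: (enum T) => [|u s [M PM]]; first by exists 0%Z.
have [Mu PMu] := evP u; exists (Z.max M Mu) => v; rewrite in_cons => /orP[/eqP -> | sv] N le_N.
- by apply: PMu; lia.
- by apply: PM => //; lia.
Qed.

Section Recurrence.
Variables (V : finType) (E : rel V).

Lemma omega_connect (a : Z -> V) (z1 z2 : Z) :
  InOmega E a -> (z1 <= z2)%Z -> connect E (a z1) (a z2).
Proof.
move=> Ea le_z12; pose p k := a (z1 + Z.of_nat k)%Z.
have Ep : forall k, (k < Z.to_nat (z2 - z1))%nat -> E (p k) (p k.+1).
  by move=> k _; rewrite /p (_ : (z1 + Z.of_nat k.+1 = z1 + Z.of_nat k + 1)%Z); [apply: Ea | lia].
have := fun_path_connect Ep (i := 0%nat) (j := Z.to_nat (z2 - z1)); rewrite leqnn /p => /(_ isT).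
by rewrite Z.add_0_r (_ : (z1 + Z.of_nat (Z.to_nat (z2 - z1)) = z2)%Z) //; lia.
Qed.

Lemma omega_on_cycle (a : Z -> V) (z1 z2 : Z) :
  InOmega E a -> (z1 < z2)%Z -> a z1 = a z2 -> on_cycle E (a z1).
Proof.
move=> Ea lt_z12 a12; exists (a (z1 + 1)%Z); first exact: Ea.
by rewrite a12; apply: omega_connect => //; lia.
Qed.

Definition zdir (fwd : bool) (z : Z) : Z := if fwd then z else (- z)%Z.

(* [recurrent true a v]: [a] takes the value [v] at arbitrarily late times;
   [recurrent false a v]: at arbitrarily early times. *)
Definition recurrent (fwd : bool) (a : Z -> V) (v : V) : Prop :=
  forall M : Z, exists2 z, (M <= zdir fwd z)%Z & a z = v.

Lemma eventually_recurrent fwd (a : Z -> V) :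
  exists Z0, forall z, (Z0 <= zdir fwd z)%Z -> recurrent fwd a (a z).
Proof.
pose P v N := recurrent fwd a v \/ forall z, (N <= zdir fwd z)%Z -> a z <> v.
have [|Z0 PZ0] := @fin_eventually V P.
  move=> v; have [rec_v | /not_all_ex_not[M notM]] := classic (recurrent fwd a v).
    by exists 0%Z => N _; left.
  exists M => N le_MN; right=> z le_Nz az_v; apply: notM; exists z => //; lia.
by exists Z0 => z le_z; case: (PZ0 (a z) Z0 (Z.le_refl _)) => // /(_ z le_z).
Qed.

Lemma recurrent_exists fwd (a : Z -> V) : exists v, recurrent fwd a v.
Proof.
have [Z0 recZ0] := eventually_recurrent fwd a.
by exists (a (zdir fwd Z0)); apply: recZ0; rewrite /zdir; case: fwd; lia.
Qed.

Lemma recurrent_ordered fwd (a : Z -> V) u v : recurrent fwd a u -> recurrent fwd a v ->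
  exists z1 z2, (z1 < z2)%Z /\ a z1 = u /\ a z2 = v.
Proof.
rewrite /recurrent /zdir; case: fwd => rec_u rec_v.
- have [z1 _ az1] := rec_u 0%Z; have [z2 lt_z12 az2] := rec_v (z1 + 1)%Z.
  by exists z1, z2; split=> //; lia.
- have [z2 _ az2] := rec_v 0%Z; have [z1 lt_z12 az1] := rec_u (- z2 + 1)%Z.
  by exists z1, z2; split=> //; lia.
Qed.

Lemma recurrent_scc_of fwd (a : Z -> V) u v : InOmega E a ->
  recurrent fwd a u -> recurrent fwd a v -> on_cycle E u /\ v \in scc_of E u.
Proof.
move=> Ea rec_u rec_v; split.
  have [z1 [z2 [lt_z12 [az1 az2]]]] := recurrent_ordered rec_u rec_u.
  by rewrite -az1; apply: (omega_on_cycle Ea lt_z12); rewrite az1 az2.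
have [z1 [z2 [lt_z12 [az1 az2]]]] := recurrent_ordered rec_u rec_v.
have [z3 [z4 [lt_z34 [az3 az4]]]] := recurrent_ordered rec_v rec_u.
rewrite inE; apply/andP; split.
- by rewrite -az1 -az2; apply: omega_connect => //; lia.
- by rewrite -az3 -az4; apply: omega_connect => //; lia.
Qed.

Lemma recurrent_connect (C D : {set V}) (a : Z -> V) z u v :
  InOmega E a -> is_scc E C -> is_scc E D ->
  (forall w, recurrent false a w -> w \in C) -> (forall w, recurrent true a w -> w \in D) ->
  u \in C -> v \in D -> connect E u (a z) /\ connect E (a z) v.
Proof.
move=> Ea sccC sccD pastC futD Cu Dv.
have [p rec_p] := recurrent_exists false a; have [f rec_f] := recurrent_exists true a.
have [z1 le_z1 az1] := rec_p (- z)%Z; have [z2 le_z2 az2] := rec_f z.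
rewrite /zdir in le_z1 le_z2; split.
- apply: connect_trans (is_scc_connect sccC Cu (pastC _ rec_p)) _.
  by rewrite -az1; apply: omega_connect => //; lia.
- apply: connect_trans _ (is_scc_connect sccD (futD _ rec_f) Dv).
  by rewrite -az2; apply: omega_connect => //; lia.
Qed.

End Recurrence.

(** * Step functions and the metric *)

Lemma floor_spec r : IZR (floor r) <= r < IZR (floor r) + 1.
Proof. exact: proj2_sig (floor_ex r). Qed.

Lemma floor_unique (n : Z) r : IZR n <= r < IZR n + 1 -> floor r = n.
Proof.
move=> [le_nr lt_rn]; have [le_fr lt_rf] := floor_spec r.
have lt1 : (floor r < n + 1)%Z by apply: lt_IZR; rewrite plus_IZR; lra.
have lt2 : (n < floor r + 1)%Z by apply: lt_IZR; rewrite plus_IZR; lra.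
lia.
Qed.

Lemma floor_addZ r (m : Z) : floor (r + IZR m) = (floor r + m)%Z.
Proof. by apply: floor_unique; rewrite plus_IZR; have := floor_spec r; lra. Qed.

Lemma Rint_RInt (f : R -> R) a b : ex_RInt f a b -> Rint f a b = RInt f a b.
Proof.
move=> intf; rewrite /Rint.
have [pr <-] := epsilon_spec (inhabits 0)
  (fun l => exists pr : Riemann_integrable f a b, RiemannInt pr = l)
  (ex_intro _ _ (ex_intro _ (ex_RInt_Reals_0 f a b intf) erefl)).
exact: esym (RInt_Reals f a b pr).
Qed.

Lemma ex_RInt_const_on (F : R -> R) a b c :
  a <= b -> (forall x, a < x < b -> F x = c) -> ex_RInt F a b.
Proof.
move=> le_ab Fc; apply: (ex_RInt_ext (fun _ => c)); last exact: ex_RInt_const.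
by rewrite Rmin_left // Rmax_right // => x /Fc.
Qed.

Lemma RInt_const_on (F : R -> R) a b c :
  a <= b -> (forall x, a < x < b -> F x = c) -> RInt F a b = (b - a) * c.
Proof.
move=> le_ab Fc; rewrite (RInt_ext F (fun _ => c)) ?RInt_const //.
by rewrite Rmin_left // Rmax_right // => x /Fc.
Qed.

Lemma RInt_le_const (F : R -> R) a b c :
  a <= b -> ex_RInt F a b -> (forall x, a < x < b -> F x <= c) -> RInt F a b <= (b - a) * c.
Proof.
move=> le_ab intF Fc; have -> : (b - a) * c = RInt (fun _ => c) a b by rewrite RInt_const.
by apply: RInt_le => //; apply: ex_RInt_const.
Qed.

Lemma RInt_ge_const (F : R -> R) a b c :
  a <= b -> ex_RInt F a b -> (forall x, a < x < b -> c <= F x) -> (b - a) * c <= RInt F a b.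
Proof.
move=> le_ab intF cF; have -> : (b - a) * c = RInt (fun _ => c) a b by rewrite RInt_const.
by apply: RInt_le => //; apply: ex_RInt_const.
Qed.

Lemma RInt_Chasles3 (F : R -> R) a c e b : a <= c -> c <= e -> e <= b -> ex_RInt F a b ->
  [/\ ex_RInt F a c, ex_RInt F c e, ex_RInt F e b &
      RInt F a b = RInt F a c + RInt F c e + RInt F e b].
Proof.
move=> le_ac le_ce le_eb intF.
have intFac : ex_RInt F a c by apply: (ex_RInt_Chasles_1 F a c b) => //; lra.
have intFcb : ex_RInt F c b by apply: (ex_RInt_Chasles_2 F a c b) => //; lra.
have intFce : ex_RInt F c e by apply: (ex_RInt_Chasles_1 F c e b) => //; lra.
have intFeb : ex_RInt F e b by apply: (ex_RInt_Chasles_2 F c e b) => //; lra.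
split=> //; rewrite -(RInt_Chasles F a c b) // -(RInt_Chasles F c e b) //.
by rewrite /plus /=; ring.
Qed.

Section StepFunctions.
Variables (V : finType) (E : rel V) (h : R).
Hypothesis h_gt0 : 0 < h.

Definition stepf (a : Z -> V) (t : R) : R -> V := fun s => a (floor ((s + t) / h)).

Lemma floor_div_spec r : IZR (floor (r / h)) * h <= r < (IZR (floor (r / h)) + 1) * h.
Proof.
have [le_fr lt_rf] := floor_spec (r / h); have hV_gt0 : 0 < / h by apply: Rinv_0_lt_compat.
split; [apply: (Rmult_le_reg_r (/ h)) | apply: (Rmult_lt_reg_r (/ h))];
  rewrite // Rmult_assoc Rinv_r; lra.
Qed.

Lemma stepf_val a t s (n : Z) : IZR n * h <= s + t < (IZR n + 1) * h -> stepf a t s = a n.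
Proof.
move=> [le_ns lt_sn]; rewrite /stepf (floor_unique (n := n)) //.
have hV_gt0 : 0 < / h by apply: Rinv_0_lt_compat.
split; [apply: (Rmult_le_reg_r h) | apply: (Rmult_lt_reg_r h)];
  rewrite // /Rdiv Rmult_assoc Rinv_l; lra.
Qed.

Lemma psi_stepf a t tau : psi tau (stepf a t) = stepf a (t + tau).
Proof.
by apply: functional_extensionality => s; rewrite /psi /stepf; congr (a (floor (_ / h))); ring.
Qed.

Lemma stepf_shift a t (m : Z) : stepf a (t + IZR m * h) = stepf (fun z => a (z + m)%Z) t.
Proof.
apply: functional_extensionality => s; rewrite /stepf -floor_addZ; congr (a (floor _)).
by field; lra.
Qed.

Lemma InDelta_stepf a t : InOmega E a -> InDelta E h (stepf a t).
Proof.
move=> Ea; exists (stepf a 0), t; split; last first.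
  by apply: functional_extensionality => s; rewrite /stepf Rplus_0_r.
have stepf_grid (n : Z) : stepf a 0 (IZR n * h) = a n by apply: stepf_val; nra.
split=> [n s s_in | i]; last by rewrite !stepf_grid; apply: Ea.
by rewrite stepf_grid; apply: stepf_val; lra.
Qed.

Lemma InDelta_stepf_repr f : InDelta E h f ->
  exists a t, [/\ InOmega E a, 0 <= t < h & f = stepf a t].
Proof.
move=> [xb [t [[xb_step Exb] ->]]]; pose a z := xb (IZR z * h).
have xbE : xb = stepf a 0.
  apply: functional_extensionality => s; have := floor_div_spec s.
  by rewrite /stepf /a Rplus_0_r => /xb_step.
pose m := floor (t / h); have := floor_div_spec t; rewrite -/m => t_in.
exists (fun z => a (z + m)%Z), (t - IZR m * h); split.
- by move=> i; rewrite (_ : (i + 1 + m = i + m + 1)%Z); [apply: Exb | lia].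
- lra.
- rewrite -stepf_shift xbE; apply: functional_extensionality => s.
  by rewrite /stepf; congr (a (floor (_ / h))); ring.
Qed.

Lemma stepf_pieces a t w : exists p c1 c2, [/\ w < p <= w + h,
  forall s, w < s < p -> stepf a t s = c1 & forall s, p <= s < w + h -> stepf a t s = c2].
Proof.
have := floor_div_spec (w + t); set n := floor _ => w_in.
exists ((IZR n + 1) * h - t), (a n), (a (n + 1)%Z); split; first lra.
- by move=> s s_in; apply: stepf_val; lra.
- by move=> s s_in; apply: stepf_val; rewrite plus_IZR; lra.
Qed.

Lemma delta_sym (f g : R -> V) : delta f g = delta g f.
Proof. by apply: functional_extensionality => s; rewrite /delta eq_sym. Qed.

Lemma delta_01 (f g : R -> V) s : 0 <= delta f g s <= 1.
Proof. by rewrite /delta; case: eqP => _; lra. Qed.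

Lemma ex_RInt_delta_const_on (f g : R -> V) x y u v : x <= y ->
  (forall s, x < s < y -> f s = u) -> (forall s, x < s < y -> g s = v) ->
  ex_RInt (delta f g) x y.
Proof.
move=> le_xy fu gv; apply: (ex_RInt_const_on (c := if u == v then 0 else 1)) => // s s_in.
by rewrite /delta fu // gv.
Qed.

Lemma ex_RInt_delta_stepf a t b t' w : ex_RInt (delta (stepf a t) (stepf b t')) w (w + h).
Proof.
have [p [c1 [c2 [p_in ac1 ac2]]]] := stepf_pieces a t w.
have [q [e1 [e2 [q_in be1 be2]]]] := stepf_pieces b t' w.
wlog le_pq : a t b t' p q c1 c2 e1 e2 p_in q_in ac1 ac2 be1 be2 / p <= q.
  move=> wlog_pq; have [le_pq | lt_qp] := Rle_lt_dec p q.
    by apply: (wlog_pq a t b t' p q c1 c2 e1 e2).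
  by rewrite delta_sym; apply: (wlog_pq b t' a t q p e1 e2 c1 c2) => //; lra.
apply: (ex_RInt_Chasles _ w q); first apply: (ex_RInt_Chasles _ w p).
- by apply: (ex_RInt_delta_const_on (u := c1) (v := e1)) => [|s s_in|s s_in];
    [lra | apply: ac1 | apply: be1]; lra.
- by apply: (ex_RInt_delta_const_on (u := c2) (v := e1)) => [|s s_in|s s_in];
    [lra | apply: ac2 | apply: be1]; lra.
- by apply: (ex_RInt_delta_const_on (u := c2) (v := e2)) => [|s s_in|s s_in];
    [lra | apply: ac2 | apply: be2]; lra.
Qed.

Lemma ex_RInt_delta f g w : InDelta E h f -> InDelta E h g -> ex_RInt (delta f g) w (w + h).
Proof.
move=> /InDelta_stepf_repr[a [t [_ _ ->]]] /InDelta_stepf_repr[b [t' [_ _ ->]]].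
exact: ex_RInt_delta_stepf.
Qed.

Section Window.
Variables (f g : R -> V).
Hypothesis int_fg : forall w, ex_RInt (delta f g) w (w + h).
Variable i : Z.
Let w := IZR i * h.

Lemma dtermE : dterm h f g i = / h * RInt (delta f g) w (w + h).
Proof.
rewrite /dterm (_ : (IZR i + 1) * h = w + h); last by rewrite /w; ring.
by rewrite Rint_RInt.
Qed.

Lemma dterm_01 : 0 <= dterm h f g i <= 1.
Proof.
have hV_gt0 : 0 < / h by apply: Rinv_0_lt_compat.
have hVh : / h * h = 1 by field; lra.
have le_ww : w <= w + h by lra.
have := RInt_le_const le_ww (int_fg w) (fun s _ => proj2 (delta_01 f g s)).
have := RInt_ge_const le_ww (int_fg w) (fun s _ => proj1 (delta_01 f g s)).
rewrite dtermE; nra.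
Qed.

Lemma dterm_le c e : w <= c <= e -> e <= w + h ->
  (forall s, w < s < c -> f s = g s) -> (forall s, e < s < w + h -> f s = g s) ->
  dterm h f g i <= (e - c) / h.
Proof.
move=> [le_wc le_ce] le_ew fg_l fg_r; have hV_gt0 : 0 < / h by apply: Rinv_0_lt_compat.
rewrite dtermE; have [_ int_ce _ ->] := RInt_Chasles3 le_wc le_ce le_ew (int_fg w).
have zero_on x y : (forall s, x < s < y -> f s = g s) -> x <= y -> RInt (delta f g) x y = 0.
  move=> fg le_xy; rewrite (RInt_const_on (c := 0)) ?Rmult_0_r // => s /fg.
  by rewrite /delta => ->; rewrite eqxx.
rewrite (zero_on w c) // (zero_on e (w + h)) //.
have := RInt_le_const le_ce int_ce (fun s _ => proj2 (delta_01 f g s)).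
by rewrite /Rdiv; nra.
Qed.

Lemma dterm_ge c e : w <= c <= e -> e <= w + h ->
  (forall s, c < s < e -> f s <> g s) -> (e - c) / h <= dterm h f g i.
Proof.
move=> [le_wc le_ce] le_ew fg_ne; have hV_gt0 : 0 < / h by apply: Rinv_0_lt_compat.
rewrite dtermE; have [int_wc int_ce int_eb ->] := RInt_Chasles3 le_wc le_ce le_ew (int_fg w).
have := RInt_ge_const le_wc int_wc (fun s _ => proj1 (delta_01 f g s)).
have := RInt_ge_const le_ew int_eb (fun s _ => proj1 (delta_01 f g s)).
rewrite (RInt_const_on (c := 1) le_ce); last first.
  by move=> s /fg_ne; rewrite /delta; case: eqP.
by rewrite /Rdiv; nra.
Qed.

End Window.

End StepFunctions.

Lemma Rle_pow_le1 x (m n : nat) : 0 <= x <= 1 -> (m <= n)%nat -> x ^ n <= x ^ m.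
Proof.
move=> x01 le_mn; rewrite -(subnKC le_mn) pow_add.
have : x ^ (n - m) <= 1 by rewrite -(pow1 (n - m)); apply: pow_incr.
by have := pow_le x m (proj1 x01); nra.
Qed.

Lemma sum_f_R0_ge_last (a : nat -> R) n : (forall k, 0 <= a k) -> a n <= sum_f_R0 a n.
Proof. by case: n => [|n] a_ge0 /=; [lra | have := cond_pos_sum a n a_ge0; lra]. Qed.

Section SeriesBounds.
Variables (V : finType) (h : R) (f g : R -> V).
Hypothesis dterm_01 : forall i, 0 <= dterm h f g i <= 1.

Lemma dseries_le n c : 0 <= c -> (forall i, Z.abs_nat i = n -> dterm h f g i <= c) ->
  0 <= dseries h f g n <= 2 * c * (/ 4) ^ n.
Proof.
move=> c_ge0 le_c; have q4_ge0 : 0 <= (/ 4) ^ n by apply: pow_le; lra.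
case: n le_c q4_ge0 => [|n] le_c q4_ge0; rewrite /dseries.
  by rewrite pow_O; have := le_c 0%Z erefl; have := dterm_01 0%Z; lra.
have := le_c (Z.of_nat n.+1) ltac:(lia); have := le_c (- Z.of_nat n.+1)%Z ltac:(lia).
by have := dterm_01 (Z.of_nat n.+1); have := dterm_01 (- Z.of_nat n.+1)%Z; nra.
Qed.

Lemma dseries_bounds n : 0 <= dseries h f g n <= 2 * (/ 4) ^ n.
Proof. by rewrite -[2]Rmult_1_r; apply: dseries_le => [|i _]; [lra | case: (dterm_01 i)]. Qed.

Lemma is_series_d : is_series (dseries h f g) (d h f g).
Proof.
have [l sum_l] : ex_series (dseries h f g).
  apply: (ex_series_le _ (fun n => 2 * (/ 4) ^ n)).
    by move=> n; rewrite /norm /= /abs /= Rabs_pos_eq; have := dseries_bounds n; lra.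
  by exists (scal 2 (/ (1 - / 4))); apply: is_series_scal_l; apply: is_series_geom;
    rewrite Rabs_pos_eq; lra.
apply/is_series_Reals; apply: epsilon_spec; exists l; exact/is_series_Reals.
Qed.

Lemma d_ge_dterm i : (/ 4) ^ (Z.abs_nat i) * dterm h f g i <= d h f g.
Proof.
have dseries_ge0 n : 0 <= dseries h f g n by case: (dseries_bounds n).
apply: Rle_trans (sum_incr _ (Z.abs_nat i) _ (proj1 (is_series_Reals _ _) is_series_d) dseries_ge0).
apply: Rle_trans (sum_f_R0_ge_last _ dseries_ge0).
have q4_ge0 : 0 <= (/ 4) ^ Z.abs_nat i by apply: pow_le; lra.
rewrite /dseries; case absi: (Z.abs_nat i) q4_ge0 => [|n] q4_ge0.
  by rewrite (_ : i = 0%Z); [lra | lia].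
have := dterm_01 (Z.of_nat n.+1); have := dterm_01 (- Z.of_nat n.+1)%Z.
have [->|->] : i = Z.of_nat n.+1 \/ i = (- Z.of_nat n.+1)%Z by lia.
all: nra.
Qed.

Lemma d_ge0 : 0 <= d h f g.
Proof. by have := d_ge_dterm 0; have := dterm_01 0%Z; rewrite /= => ??; nra. Qed.

(* Windows with [|i| <= N] contribute at most [4 eps], the others at most [4 / 2^N]. *)
Lemma d_le_window (N : nat) eps : 0 <= eps ->
  (forall i, (Z.abs_nat i <= N)%nat -> dterm h f g i <= eps) ->
  d h f g <= 4 * eps + 4 * (/ 2) ^ N.
Proof.
move=> eps_ge0 small; pose K := 2 * eps + 2 * (/ 2) ^ N.
have half01 n : 0 <= (/ 2) ^ n <= 1.
  by split; [apply: pow_le; lra | rewrite -(pow1 n); apply: pow_incr; lra].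
have quarter n : (/ 4) ^ n = (/ 2) ^ n * (/ 2) ^ n by rewrite -Rpow_mult_distr; congr pow; field.
have term_le n : 0 <= dseries h f g n <= K * (/ 2) ^ n.
  have := half01 n; have := half01 N; rewrite /K.
  have [le_nN | lt_Nn] := leqP n N.
  - have := @dseries_le n eps eps_ge0 (fun i absi => small i ltac:(lia)); rewrite quarter.
    have : eps * ((/ 2) ^ n * (/ 2) ^ n) <= eps * (/ 2) ^ n.
      by apply: Rmult_le_compat_l => //; have := half01 n; nra.
    nra.
  - have := @Rle_pow_le1 (/ 2) N n ltac:(lra) (ltnW lt_Nn).
    have := @dseries_le n 1 ltac:(lra) (fun i _ => proj2 (dterm_01 i)); rewrite quarter; nra.
have geom : is_series (fun n => K * (/ 2) ^ n) (K * 2).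
  rewrite [_ * 2](_ : _ = scal K (/ (1 - / 2))); last by rewrite /scal /= /mult /=; field.
  by apply: is_series_scal_l; apply: is_series_geom; rewrite Rabs_pos_eq; lra.
rewrite -(is_series_unique _ _ is_series_d) -/(4 * eps + 4 * _) (_ : _ + _ = K * 2); last first.
  by rewrite /K; ring.
by rewrite -(is_series_unique _ _ geom); apply: Series_le => //; exists (K * 2).
Qed.

End SeriesBounds.

Section Distances.
Variables (V : finType) (h : R).
Hypothesis h_gt0 : 0 < h.

(* The half-open window makes [agree 0] trivial, and [agree N.+1] covers both ends
   of every grid interval [[i, i + 1]] with [|i| <= N]. *)
Definition agree (n : nat) (a b : Z -> V) : Prop :=
  forall z : Z, (- Z.of_nat n < z <= Z.of_nat n)%Z -> a z = b z.

Lemma dterm_stepf_le (a b : Z -> V) t t' i : 0 <= t <= h -> 0 <= t' <= h ->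
  a i = b i -> a (i + 1)%Z = b (i + 1)%Z ->
  dterm h (stepf h a t) (stepf h b t') i <= Rabs (t - t') / h.
Proof.
move=> t_in t'_in ab_i ab_i1.
wlog le_tt' : a b t t' t_in t'_in ab_i ab_i1 / t <= t'.
  move=> wlog_t; have [le_tt' | lt_t't] := Rle_lt_dec t t'; first by apply: wlog_t.
  by rewrite /dterm delta_sym Rabs_minus_sym; apply: wlog_t => //; lra.
rewrite Rabs_left1 ?Ropp_minus_distr; last lra.
rewrite (_ : t' - t = ((IZR i + 1) * h - t) - ((IZR i + 1) * h - t')); last ring.
apply: (dterm_le h_gt0 (ex_RInt_delta_stepf h_gt0 a t b t')); try lra.
- by move=> s s_in; rewrite (stepf_val h_gt0 a (n := i)) ?(stepf_val h_gt0 b (n := i)) //; lra.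
- move=> s s_in.
  rewrite (stepf_val h_gt0 a (n := (i + 1)%Z)) ?(stepf_val h_gt0 b (n := (i + 1)%Z)) //;
    rewrite plus_IZR; lra.
Qed.

Lemma d_stepf_le (a b : Z -> V) t t' (N : nat) del :
  0 <= t <= h -> 0 <= t' <= h -> agree N.+1 a b -> Rabs (t - t') <= del ->
  d h (stepf h a t) (stepf h b t') <= 4 * (del / h) + 4 * (/ 2) ^ N.
Proof.
move=> t_in t'_in ab le_del; have hV_gt0 : 0 < / h by apply: Rinv_0_lt_compat.
apply: d_le_window => [i | | i le_iN].
- exact: (dterm_01 h_gt0 (ex_RInt_delta_stepf h_gt0 a t b t')).
- by have := Rabs_pos (t - t'); rewrite /Rdiv; nra.
- apply: Rle_trans (dterm_stepf_le _ _ _ _) _ => //; try by apply: ab; lia.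
  by rewrite /Rdiv; apply: Rmult_le_compat_r; lra.
Qed.

(* A disagreement on a whole interval of length [h] covers half of one of the
   two windows it meets. *)
Lemma d_ge_of_ne (f g : R -> V) p : (forall w, ex_RInt (delta f g) w (w + h)) ->
  (forall s, p < s < p + h -> f s <> g s) ->
  (/ 4) ^ (Z.abs_nat (floor (p / h))).+1 / 2 <= d h f g.
Proof.
move=> int_fg ne_fg; have := floor_div_spec h_gt0 p; set i := floor (p / h) => p_in.
have dterm01 := dterm_01 h_gt0 int_fg.
have q4_ge0 k : 0 <= (/ 4) ^ k by apply: pow_le; lra.
have half_le x : h / 2 <= x -> / 2 <= x / h.
  move=> le_x; apply: (Rmult_le_reg_r h) => //; rewrite /Rdiv Rmult_assoc Rinv_l; lra.
have [long_i | long_i1] := Rle_lt_dec (h / 2) ((IZR i + 1) * h - p).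
- have := dterm_ge h_gt0 int_fg (i := i) (c := p) (e := (IZR i + 1) * h).
  move=> /(_ ltac:(lra) ltac:(lra) (fun s s_in => ne_fg s ltac:(lra))).
  have := half_le _ long_i; have := d_ge_dterm dterm01 i.
  have := Rle_pow_le1 (x := / 4) (m := Z.abs_nat i) (n := (Z.abs_nat i).+1) ltac:(lra) (leqnSn _).
  by have := q4_ge0 (Z.abs_nat i); have := q4_ge0 (Z.abs_nat i).+1; have := dterm01 i; nra.
- have := dterm_ge h_gt0 int_fg (i := (i + 1)%Z) (c := (IZR i + 1) * h) (e := p + h).
  rewrite plus_IZR => /(_ ltac:(lra) ltac:(lra) (fun s s_in => ne_fg s ltac:(lra))).
  have := half_le (p + h - (IZR i + 1) * h) ltac:(lra); have := d_ge_dterm dterm01 (i + 1).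
  have := Rle_pow_le1 (x := / 4) (m := Z.abs_nat (i + 1)) (n := (Z.abs_nat i).+1) ltac:(lra)
    ltac:(lia).
  have := q4_ge0 (Z.abs_nat (i + 1)); have := q4_ge0 (Z.abs_nat i).+1.
  by have := dterm01 (i + 1)%Z; nra.
Qed.

End Distances.

(** * Limit points of orbits *)

Lemma dep_choice (S : Type) (P : nat -> S -> Prop) (rel : nat -> S -> S -> Prop) (s0 : S) :
  P 0%nat s0 -> (forall n s, P n s -> exists s', P n.+1 s' /\ rel n s s') ->
  exists f : nat -> S, f 0%nat = s0 /\ forall n, P n (f n) /\ rel n (f n) (f n.+1).
Proof.
move=> P0 stepP; pose next n s := epsilon (inhabits s0) (fun s' => P n.+1 s' /\ rel n s s').
pose f := fix f n := if n is m.+1 then next m (f m) else s0.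
have Pf n : P n (f n).
  by elim: n => [|n IHn] //=; case: (epsilon_spec (inhabits s0) _ (stepP n _ IHn)).
exists f; split=> // n; split=> //.
by case: (epsilon_spec (inhabits s0) _ (stepP n _ (Pf n))).
Qed.

Lemma infinitely_often_pigeon (T : finType) (P : nat -> Prop) (c : nat -> T) :
  (forall M, exists2 k, (M <= k)%nat & P k) ->
  exists v, forall M, exists2 k, (M <= k)%nat & P k /\ c k = v.
Proof.
move=> infP; apply: NNPP => no_v.
pose Q v (N : Z) := forall k, (N <= Z.of_nat k)%Z -> P k -> c k <> v.
have [|N QN] := @fin_eventually T Q.
  move=> v; apply: NNPP => not_ev; apply: no_v; exists v => M; apply: NNPP => not_M.
  apply: not_ev; exists (Z.of_nat M) => N le_MN k le_Nk Pk ckv.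
  by apply: not_M; exists k => //; lia.
have [k le_k Pk] := infP (Z.to_nat N); exact: (QN (c k) N (Z.le_refl N) k ltac:(lia) Pk).
Qed.

Section Agreement.
Variable V : finType.
Implicit Types (a b q : Z -> V) (n : nat).

Lemma agree_sym n a b : agree n a b -> agree n b a.
Proof. by move=> ab z /ab. Qed.

Lemma agree_trans n a b q : agree n a b -> agree n b q -> agree n a q.
Proof. by move=> ab bq z z_in; rewrite ab // bq. Qed.

Lemma agree_le m n a b : (m <= n)%nat -> agree n a b -> agree m a b.
Proof. by move=> le_mn ab z z_in; apply: ab; lia. Qed.

Definition upd n q (v1 v2 : V) : Z -> V := fun z =>
  if (z =? - Z.of_nat n)%Z then v1 else if (z =? Z.of_nat n + 1)%Z then v2 else q z.

Lemma upd_agree n q v1 v2 : agree n (upd n q v1 v2) q.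
Proof.
move=> z z_in; rewrite /upd.
by case: Z.eqb_spec => [? | _]; [exfalso; lia | case: Z.eqb_spec => [? | //]; exfalso; lia].
Qed.

Lemma agree_upd n a q : agree n a q ->
  agree n.+1 a (upd n q (a (- Z.of_nat n)%Z) (a (Z.of_nat n + 1)%Z)).
Proof.
move=> aq z z_in; rewrite /upd.
case: Z.eqb_spec => [-> // | ne1]; case: Z.eqb_spec => [-> // | ne2].
by apply: aq; lia.
Qed.

Lemma chain_limit (Q : nat -> Z -> V) : (forall n, agree n (Q n.+1) (Q n)) ->
  forall n, agree n (fun z => Q (Z.abs_nat z).+1 z) (Q n).
Proof.
move=> chainQ; have QQ n k : agree n (Q (n + k)%nat) (Q n).
  elim: k => [|k IHk]; first by rewrite addn0.
  by rewrite addnS; apply: agree_trans IHk; apply: agree_le (chainQ _); lia.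
move=> n z z_in; case: (leqP n (Z.abs_nat z).+1) => [le_n | lt_n].
  by rewrite -(subnKC le_n) QQ.
by rewrite -(QQ (Z.abs_nat z).+1 (n - (Z.abs_nat z).+1)%nat) ?subnKC //; [lia | lia].
Qed.

Lemma agree_InOmega (E : rel V) b : (forall n, exists q, InOmega E q /\ agree n q b) -> InOmega E b.
Proof.
move=> approx z; have [q [Eq qb]] := approx (Z.abs_nat z).+2.
by rewrite -!qb; [apply: Eq | lia | lia].
Qed.

Lemma agree_subsequence (g : nat -> Z -> V) :
  exists b (kk : nat -> nat), forall n, (n <= kk n)%nat /\ agree n (g (kk n)) b.
Proof.
pose good n q := forall M, exists2 k, (M <= k)%nat & agree n (g k) q.
have good0 : good 0%nat (g 0%nat) by move=> M; exists M => // z; lia.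
have [|Q [_ chainQ]] := dep_choice (rel := fun n q q' => agree n q' q) good0.
  move=> n q good_q.
  have [[v1 v2] inf] := infinitely_often_pigeon
    (fun k => (g k (- Z.of_nat n)%Z, g k (Z.of_nat n + 1)%Z)) good_q.
  exists (upd n q v1 v2); split; last exact: upd_agree.
  by move=> M; have [k le_Mk [gq [<- <-]]] := inf M; exists k => //; apply: agree_upd.
have bQ := chain_limit (fun n => proj2 (chainQ n)).
have [kk kkP] := choice (fun n k => (n <= k)%nat /\ agree n (g k) (Q n))
  (fun n => let: ex_intro2 k le_k gk := proj1 (chainQ n) n in ex_intro _ k (conj le_k gk)).
exists (fun z => Q (Z.abs_nat z).+1 z), kk => n; have [le_n gQ] := kkP n.
by split=> //; apply: agree_trans gQ (agree_sym (bQ n)).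
Qed.

End Agreement.

Definition rdir (fwd : bool) (r : R) : R := if fwd then r else - r.

Lemma rdir_zdir fwd (z : Z) r : rdir fwd (IZR (zdir fwd z) * r) = IZR z * r.
Proof. by case: fwd; rewrite /rdir /zdir ?opp_IZR; ring. Qed.

Lemma pow_half_lt eps : 0 < eps -> exists N, forall n, (N <= n)%nat -> (/ 2) ^ n < eps.
Proof.
move=> eps_gt0; have [N small] := pow_lt_1_zero (/ 2) ltac:(rewrite Rabs_pos_eq; lra) eps eps_gt0.
exists N => n le_Nn; rewrite -(Rabs_pos_eq ((/ 2) ^ n)); first by apply: small; lia.
by apply: pow_le; lra.
Qed.

Section Limits.
Variables (V : finType) (E : rel V) (h : R).
Hypothesis h_gt0 : 0 < h.

Lemma stepf_index_far fwd (a : Z -> V) t T p (Z0 : Z) :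
  Rabs (IZR Z0 * h) + Rabs p + Rabs t + h < rdir fwd T ->
  forall s, p < s < p + h -> exists z, (Z0 <= zdir fwd z)%Z /\ stepf h a (t + T) s = a z.
Proof.
move=> far s s_in; exists (floor ((s + (t + T)) / h)); split=> //.
have := floor_div_spec h_gt0 (s + (t + T)); set z := floor _ => z_in.
have abs x : - Rabs x <= x <= Rabs x by split_Rabs; lra.
have := abs (IZR Z0 * h); have := abs p; have := abs t.
rewrite /rdir /zdir in far *; case: fwd far => far abs_t abs_p abs_Z0.
- have : IZR Z0 * h < (IZR z + 1) * h by lra.
  by move/(Rmult_lt_reg_r h _ _ h_gt0); rewrite -plus_IZR => /lt_IZR; lia.
- have : IZR z * h < - IZR Z0 * h by lra.
  by rewrite -opp_IZR => /(Rmult_lt_reg_r h _ _ h_gt0) /lt_IZR; lia.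
Qed.

(* Every value of a limit point is a recurrent value: otherwise the limit point is
   constant equal to a non-recurrent value on a window of length [h], which the
   far-shifted trajectory misses entirely. *)
Lemma limit_value_recurrent fwd (a : Z -> V) t y (tk : nat -> R) :
  InDelta E h y -> cv_infty (fun k => rdir fwd (tk k)) ->
  Un_cv (fun k => d h (psi (tk k) (stepf h a t)) y) 0 -> forall s, recurrent fwd a (y s).
Proof.
move=> Dy cv_t cv_d s; apply: NNPP => not_rec.
have [b [t' [_ _ y_def]]] := InDelta_stepf_repr h_gt0 Dy; subst y.
have [Z0 recZ0] := eventually_recurrent fwd a.
have := floor_div_spec h_gt0 (s + t'); set n := floor _ => s_in.
pose p := IZR n * h - t'.
have y_const s' : p < s' < p + h -> stepf h b t' s' = stepf h b t' s.
  by move=> s'_in; rewrite !(stepf_val h_gt0 b (n := n)) //; rewrite /p in s'_in; lra.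
pose c := (/ 4) ^ (Z.abs_nat (floor (p / h))).+1 / 2.
have c_gt0 : 0 < c by rewrite /c; have := pow_lt (/ 4) (Z.abs_nat (floor (p / h))).+1; lra.
have [K1 close] := cv_d c c_gt0.
have [K2 far] := cv_t (Rabs (IZR Z0 * h) + Rabs p + Rabs t + h).
pose k := maxn K1 K2.
have ne s' : p < s' < p + h -> stepf h a (t + tk k) s' <> stepf h b t' s'.
  move=> s'_in; rewrite y_const //.
  have [z [le_z ->]] := stepf_index_far a (far k ltac:(lia)) s'_in.
  by move=> az; apply: not_rec; rewrite -az; apply: recZ0.
have := d_ge_of_ne h_gt0 (ex_RInt_delta_stepf h_gt0 a (t + tk k) b t') ne.
have := close k ltac:(lia); rewrite /R_dist Rminus_0_r psi_stepf -/c.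
by have := Rle_abs (d h (stepf h a (t + tk k)) (stepf h b t')); lra.
Qed.

Lemma limit_in_lift_scc fwd (a : Z -> V) t y (tk : nat -> R) : InOmega E a ->
  InDelta E h y -> cv_infty (fun k => rdir fwd (tk k)) ->
  Un_cv (fun k => d h (psi (tk k) (stepf h a t)) y) 0 ->
  exists C, is_scc E C /\ liftC E h C y.
Proof.
move=> Ea Dy cv_t cv_d; have [u rec_u] := recurrent_exists fwd a.
have [cyc_u _] := recurrent_scc_of Ea rec_u rec_u.
exists (scc_of E u); split; first exact: is_scc_scc_of.
split=> // s; exact: (recurrent_scc_of Ea rec_u (limit_value_recurrent Dy cv_t cv_d s)).2.
Qed.

Lemma limit_exists fwd (a : Z -> V) t : InOmega E a -> 0 <= t <= h ->
  exists y (tk : nat -> R), [/\ InDelta E h y, cv_infty (fun k => rdir fwd (tk k)) &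
    Un_cv (fun k => d h (psi (tk k) (stepf h a t)) y) 0].
Proof.
move=> Ea t_in; pose g k z := a (z + zdir fwd (Z.of_nat k))%Z.
have [b [kk kkP]] := agree_subsequence g.
have Eg k : InOmega E (g k).
  by move=> z; rewrite /g (_ : (z + 1 + _ = z + zdir fwd (Z.of_nat k) + 1)%Z); [apply: Ea | lia].
have Eb : InOmega E b.
  by apply: agree_InOmega => n; exists (g (kk n)); split; [apply: Eg | case: (kkP n)].
exists (stepf h b t), (fun n => IZR (zdir fwd (Z.of_nat (kk n.+1))) * h); split.
- exact: InDelta_stepf.
- move=> M; have [N le_N] := INR_unbounded (M / h); exists N => n le_Nn.
  have le_kk : INR N <= INR (kk n.+1) by apply: le_INR; case: (kkP n.+1) => ? _; lia.
  rewrite rdir_zdir -INR_IZR_INZ.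
  have := Rmult_lt_compat_r h _ _ h_gt0 le_N.
  by rewrite /Rdiv Rmult_assoc Rinv_l; [nra | lra].
- move=> eps eps_gt0; have [N small] := @pow_half_lt (eps / 4) ltac:(lra).
  exists N => n le_Nn; rewrite /R_dist Rminus_0_r psi_stepf (stepf_shift h_gt0).
  have [_ gb] := kkP n.+1; rewrite /g in gb.
  have := d_stepf_le h_gt0 t_in t_in gb (Rle_refl (Rabs (t - t))).
  rewrite Rminus_diag Rabs_R0 /Rdiv Rmult_0_l Rabs_pos_eq.
    by have := small n ltac:(lia); lra.
  exact: d_ge0 (dterm_01 h_gt0 (ex_RInt_delta_stepf h_gt0 (g (kk n.+1)) t b t)).
Qed.

Lemma recurrent_mem_scc fwd (a : Z -> V) t (C : {set V}) :
  InOmega E a -> 0 <= t <= h -> is_scc E C ->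
  (forall y tk, InDelta E h y -> cv_infty (fun k => rdir fwd (tk k)) ->
     Un_cv (fun k => d h (psi (tk k) (stepf h a t)) y) 0 -> liftC E h C y) ->
  forall v, recurrent fwd a v -> v \in C.
Proof.
move=> Ea t_in sccC lim_C v rec_v.
have [y [tk [Dy cv_t cv_d]]] := limit_exists fwd Ea t_in.
have [_ yC] := lim_C y tk Dy cv_t cv_d.
have [_] := recurrent_scc_of Ea (limit_value_recurrent Dy cv_t cv_d 0) rec_v.
by rewrite inE => /andP[]; apply: is_scc_mem sccC (yC 0).
Qed.

End Limits.

(** * Compactness of the lifts *)

Section Covers.
Variables (X I : Type) (U : I -> X -> Prop).

Definition finitely_covered (S : X -> Prop) : Prop :=
  exists l : list I, forall f, S f -> exists i, List.In i l /\ U i f.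

Lemma finitely_covered_sub (S S' : X -> Prop) :
  (forall f, S f -> S' f) -> finitely_covered S' -> finitely_covered S.
Proof. by move=> sub [l covl]; exists l => f /sub /covl. Qed.

Lemma finitely_covered_bigcup (T : finType) (S : T -> X -> Prop) :
  (forall u, finitely_covered (S u)) -> finitely_covered (fun f => exists u, S u f).
Proof.
move=> fcS; suff [l covl] : finitely_covered (fun f => exists2 u, u \in enum T & S u f).
  by exists l => f [u Suf]; apply: covl; exists u; rewrite ?mem_enum.
elim: (enum T) => [|u s [l covl]]; first by exists nil => f [].
have [lu covlu] := fcS u; exists (lu ++ l)%list => f [w].
rewrite in_cons => /orP[/eqP -> | sw] Swf.
- by have [i [il Ui]] := covlu f Swf; exists i; split=> //; apply: List.in_or_app; left.
- have [i [il Ui]] := covl f (ex_intro2 _ _ w sw Swf).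
  by exists i; split=> //; apply: List.in_or_app; right.
Qed.

End Covers.

Lemma nested_dyadic (J : nat -> nat) : J 0%nat = 0%nat ->
  (forall n, J n.+1 = (J n + J n)%nat \/ J n.+1 = (J n + J n).+1) ->
  exists x, 0 <= x <= 1 /\
    forall n, INR (J n) * (/ 2) ^ n <= x <= (INR (J n) + 1) * (/ 2) ^ n.
Proof.
move=> J0 J_next; pose lo n := INR (J n) * (/ 2) ^ n; pose hi n := (INR (J n) + 1) * (/ 2) ^ n.
have lo_hi n : lo n <= hi n by rewrite /lo /hi; have := pow_lt (/ 2) n; lra.
have step n : lo n <= lo n.+1 /\ hi n.+1 <= hi n.
  have INR_double k : INR (k + k)%nat = 2 * INR k by rewrite -plusE plus_INR; lra.
  rewrite /lo /hi /=; have := pow_lt (/ 2) n.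
  by case: (J_next n) => ->; rewrite ?S_INR INR_double; lra.
have mono m k : lo m <= lo (m + k)%nat /\ hi (m + k)%nat <= hi m.
  elim: k => [|k [IHlo IHhi]]; first by rewrite addn0; lra.
  by rewrite addnS; have := step (m + k)%nat; lra.
have lo_le_hi m n : lo m <= hi n.
  have [le_mn | lt_nm] := leqP m n.
  - by have := mono m (n - m)%nat; rewrite subnKC //; have := lo_hi n; lra.
  - by have := mono n (m - n)%nat; rewrite subnKC ?(ltnW lt_nm) //; have := lo_hi m; lra.
have [x [ub least]] : {x | is_lub (fun r => exists n, r = lo n) x}.
  apply: completeness; last by exists (lo 0%nat), 0%nat.
  by exists (hi 0%nat) => r [n ->]; apply: lo_le_hi.
have lo_x n : lo n <= x by apply: ub; exists n.
have x_hi n : x <= hi n by apply: least => r [m ->].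
exists x; split; last by move=> n; split; [apply: lo_x | apply: x_hi].
by have := lo_x 0%nat; have := x_hi 0%nat; rewrite /lo /hi J0 /=; lra.
Qed.

Section Compactness.
Variables (V : finType) (E : rel V) (h : R).
Hypothesis h_gt0 : 0 < h.
Variable C : {set V}.

Definition cell (n : nat) (q : Z -> V) (j : nat) (f : R -> V) : Prop :=
  exists a th, [/\ f = stepf h a th, InOmega E a, forall z, a z \in C, agree n a q &
    0 <= th <= h /\ INR j * (/ 2) ^ n * h <= th <= (INR j + 1) * (/ 2) ^ n * h].

Lemma liftC_cell0 q f : liftC E h C f -> cell 0 q 0 f.
Proof.
move=> [Df fC]; have [a [th [Ea th_in f_def]]] := InDelta_stepf_repr h_gt0 Df.
exists a, th; split=> // [z | z | ]; last by rewrite /=; lra.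
- by have := fC (IZR z * h - th); rewrite f_def (stepf_val h_gt0 a (n := z)) //; lra.
- by lia.
Qed.

Lemma cell_split n q j f : cell n q j f ->
  exists u : V * V * bool, cell n.+1 (upd n q u.1.1 u.1.2) (j + j + u.2) f.
Proof.
move=> [a [th [-> Ea aC aq [th_in th_j]]]].
have half : (/ 2) ^ n.+1 = / 2 * (/ 2) ^ n by [].
have INR_double k : INR (k + k)%nat = 2 * INR k by rewrite -plusE plus_INR; lra.
have p_gt0 := pow_lt (/ 2) n ltac:(lra).
have [th_mid | th_mid] := Rle_lt_dec ((2 * INR j + 1) * (/ 2) ^ n.+1 * h) th;
  [exists (a (- Z.of_nat n)%Z, a (Z.of_nat n + 1)%Z, true) |
   exists (a (- Z.of_nat n)%Z, a (Z.of_nat n + 1)%Z, false)];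
  exists a, th; (split; [by [] | by [] | by [] | exact: agree_upd | split => //]);
  rewrite /= ?addn1 ?addn0 ?S_INR INR_double; rewrite half in th_mid *; nra.
Qed.

Section BadCells.
Variables (I : Type) (U : I -> (R -> V) -> Prop).
Hypothesis not_fc : ~ finitely_covered U (liftC E h C).

Lemma bad_cell_chain : exists (Q : nat -> Z -> V) (J : nat -> nat), J 0%nat = 0%nat /\
  forall n, [/\ ~ finitely_covered U (cell n (Q n) (J n)), agree n (Q n.+1) (Q n) &
    J n.+1 = (J n + J n)%nat \/ J n.+1 = (J n + J n).+1].
Proof.
have [f Kf] : exists f, liftC E h C f.
  by apply: NNPP => noK; apply: not_fc; exists nil => f Kf; case: noK; exists f.
have [q0 _] := InDelta_stepf_repr h_gt0 (proj1 Kf).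
have bad0 : ~ finitely_covered U (cell 0 q0 0).
  by move=> fc0; apply: not_fc; apply: finitely_covered_sub fc0 => g; apply: liftC_cell0.
have [|QJ [QJ0 chain]] := dep_choice
  (P := fun n (s : (Z -> V) * nat) => ~ finitely_covered U (cell n s.1 s.2))
  (rel := fun n s s' => agree n s'.1 s.1 /\ (s'.2 = s.2 + s.2 \/ s'.2 = (s.2 + s.2).+1)%nat)
  (s0 := (q0, 0%nat)) bad0.
  move=> n [q j] /= bad; apply: NNPP => no_child; apply: bad.
  apply: finitely_covered_sub (@cell_split n q j) _.
  apply: finitely_covered_bigcup => -[[v1 v2] b]; apply: NNPP => bad_child; apply: no_child.
  exists (upd n q v1 v2, (j + j + b)%nat); split=> //=; split; first exact: upd_agree.
  by case: b bad_child => _; [right; rewrite addn1 | left; rewrite addn0].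
exists (fun n => (QJ n).1), (fun n => (QJ n).2); split; first by rewrite QJ0.
by move=> n; have [bad [ag J_next]] := chain n.
Qed.

End BadCells.

Lemma cell_d_le n q j f b x : cell n.+1 q j f -> agree n.+1 b q -> 0 <= x <= 1 ->
  INR j * (/ 2) ^ n.+1 <= x <= (INR j + 1) * (/ 2) ^ n.+1 ->
  d h (stepf h b (x * h)) f <= 6 * (/ 2) ^ n.
Proof.
move=> [a [th [-> _ _ aq [th_in th_j]]]] bq x01 x_j.
have close : Rabs (x * h - th) <= (/ 2) ^ n.+1 * h by apply: Rabs_le; nra.
have := d_stepf_le h_gt0 (t := x * h) ltac:(nra) th_in (agree_trans bq (agree_sym aq)) close.
by rewrite /Rdiv Rmult_assoc Rinv_r ?Rmult_1_r /=; lra.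
Qed.

Lemma compact_liftC : compact_in_Delta E h (liftC E h C).
Proof.
split=> [f [] // | I U openU coverU]; apply: NNPP => not_fc.
have [Q [J [J0 chain]]] := bad_cell_chain not_fc.
have [x [x01 x_J]] := nested_dyadic J0 (fun n => let: And3 _ _ J_next := chain n in J_next).
pose b z := Q (Z.abs_nat z).+1 z.
have bQ : forall n, agree n b (Q n) := chain_limit (fun n => let: And3 _ ag _ := chain n in ag).
have approx n : exists a, [/\ InOmega E a, forall z, a z \in C & agree n a b].
  have [bad _ _] := chain n; apply: NNPP => no_a; apply: bad; exists nil => f.
  move=> [a [th [_ Ea aC aQ _]]]; case: no_a; exists a; split=> //.
  exact: agree_trans aQ (agree_sym (bQ n)).
have Kb : liftC E h C (stepf h b (x * h)).
  split.
    apply: (InDelta_stepf h_gt0); apply: agree_InOmega => n.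
    by have [a [? _ ?]] := approx n; exists a.
  move=> s; rewrite /stepf; set z := floor _; have [a [_ aC ab]] := approx (Z.abs_nat z).+1.
  by rewrite -ab //; lia.
have [i Ui] := coverU _ Kb; have [_ [eps [eps_gt0 ball]]] := openU i _ Ui.
have [n small] := @pow_half_lt (eps / 6) ltac:(lra).
have [bad _ _] := chain n.+1; apply: bad; exists [:: i] => f cell_f; exists i; split; first by left.
have [a [th [f_def Ea _ _ _]]] := cell_f.
apply: ball; first by rewrite f_def; apply: (InDelta_stepf h_gt0).
by have := cell_d_le cell_f (bQ n.+1) x01 (x_J n.+1); have := small n (leqnn n); lra.
Qed.

End Compactness.

(** * The Morse sets *)

Section MorseSets.
Variables (V : finType) (E : rel V) (h : R).
Hypothesis h_gt0 : 0 < h.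

(* Wind periodically around a closed path through [u] inside [C]. *)
Lemma liftC_nonempty (C : {set V}) : is_scc E C -> exists f, liftC E h C f.
Proof.
move=> sccC; have [/set0Pn[u Cu] [sC _]] := sccC.
have [n [p [n_gt0 [p0 [pn [Ep Cp]]]]]] := sC u u Cu Cu.
pose a z := p (Z.to_nat (z mod Z.of_nat n)).
have mod_bound z : (0 <= z mod Z.of_nat n < Z.of_nat n)%Z by apply: Z.mod_pos_bound; lia.
have Ea : InOmega E a.
  move=> z; rewrite /a -(Zplus_mod_idemp_l z); have := mod_bound z.
  set k := (z mod Z.of_nat n)%Z => k_in.
  have [k_last | k_mid] := Z.eq_dec (k + 1) (Z.of_nat n).
  - rewrite k_last Z_mod_same_full (_ : Z.to_nat k = n.-1) /=; last lia.
    by have := Ep n.-1 ltac:(lia); rewrite prednK // pn -p0.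
  - rewrite Z.mod_small ?Z2Nat.inj_add /= ?Nat.add_1_r; try lia.
    by apply: Ep; lia.
exists (stepf h a 0); split; first exact: InDelta_stepf.
by move=> s; apply: Cp; have := mod_bound (floor ((s + 0) / h)); lia.
Qed.

Lemma liftC_eq (C D : {set V}) : is_scc E C -> is_scc E D ->
  forall f, liftC E h C f -> liftC E h D f -> C = D.
Proof. by move=> sccC sccD f [_ fC] [_ fD]; apply: is_scc_eq sccC sccD (fC 0) (fD 0). Qed.

Lemma liftC_invariant (C : {set V}) : Defs.invariant (liftC E h C).
Proof.
move=> t f [[xb [t0 [xbP ->]]] fC]; split=> [|s]; last exact: fC.
exists xb, (t0 + t); split=> //; apply: functional_extensionality => s.
by rewrite /psi; congr xb; ring.
Qed.

(* An orbit staying within distance [1] of the lift of [C] only visits [C]: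
   aligning a window with a step, a value outside [C] costs a full unit of [d]. *)
Lemma liftC_isolated (C : {set V}) : isolated E h (liftC E h C).
Proof.
exists (fun g => InDelta E h g /\ exists2 f, liftC E h C f & d h f g < 1); split=> [f [] // | ].
split=> [f Kf | x Dx near]; first by exists 1; split=> [|g Dg dfg]; [lra | split=> //; exists f].
split=> // s; have [a [t [Ea t_in x_def]]] := InDelta_stepf_repr h_gt0 Dx; subst x.
have := floor_div_spec h_gt0 (s + t); set n := floor _ => s_in.
rewrite (stepf_val h_gt0 a (n := n)) //; apply: NNPP => an_C.
have [_ [f [Df fC] dfx]] := near (IZR n * h - t).
rewrite psi_stepf (_ : t + _ = IZR n * h) in dfx; last ring.
have int_fx w := ex_RInt_delta h_gt0 w Df (InDelta_stepf h_gt0 (IZR n * h) Ea).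
have dterm_ge1 : (h - 0) / h <= dterm h f (stepf h a (IZR n * h)) 0.
  apply: (dterm_ge h_gt0 int_fx (i := 0%Z)); rewrite ?Rmult_0_l; try lra.
  move=> s' s'_in; rewrite (stepf_val h_gt0 a (n := n)); last lra.
  by move=> fs_an; apply: an_C; rewrite -fs_an; apply: fC.
have : (h - 0) / h = 1 by field; lra.
by have := d_ge_dterm (dterm_01 h_gt0 int_fx) 0; rewrite /= Rmult_1_l; lra.
Qed.

Lemma limit_sets_in_lifts x : InDelta E h x ->
  (forall y, omega_lim E h x y -> exists C, is_scc E C /\ liftC E h C y) /\
  (forall y, alpha_lim E h x y -> exists C, is_scc E C /\ liftC E h C y).
Proof.
move=> Dx; have [a [t [Ea t_in ->]]] := InDelta_stepf_repr h_gt0 Dx.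
split=> y [Dy [tk [cv_t cv_d]]].
- exact: (limit_in_lift_scc (fwd := true) h_gt0 Ea Dy cv_t cv_d).
- exact: (limit_in_lift_scc (fwd := false) h_gt0 Ea Dy cv_t cv_d).
Qed.

Lemma connecting_orbit (C D : {set V}) x : is_scc E C -> is_scc E D -> InDelta E h x ->
  (forall y, alpha_lim E h x y -> liftC E h C y) ->
  (forall y, omega_lim E h x y -> liftC E h D y) ->
  forall s u v, u \in C -> v \in D -> connect E u (x s) /\ connect E (x s) v.
Proof.
move=> sccC sccD Dx alphaC omegaD s u v Cu Dv.
have [a [t [Ea t_in x_def]]] := InDelta_stepf_repr h_gt0 Dx.
have past w : recurrent false a w -> w \in C.
  apply: (recurrent_mem_scc h_gt0 (t := t) Ea _ sccC) => [|y tk Dy cv_t cv_d]; first lra.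
  by apply: alphaC; split=> //; exists tk; rewrite x_def.
have future w : recurrent true a w -> w \in D.
  apply: (recurrent_mem_scc h_gt0 (t := t) Ea _ sccD) => [|y tk Dy cv_t cv_d]; first lra.
  by apply: omegaD; split=> //; exists tk; rewrite x_def.
by rewrite x_def; apply: recurrent_connect Ea sccC sccD past future Cu Dv.
Qed.

(* Along a chain of connecting orbits every component reaches the next one; if the
   chain closes up, the first orbit connects [j 0] to itself and so lies in its lift. *)
Lemma no_cycles (l : nat) (j : nat -> {set V}) (x : nat -> R -> V) :
  (1 <= l)%nat -> (forall m, (m <= l)%nat -> is_scc E (j m)) ->
  (forall m, (1 <= m)%nat -> (m <= l)%nat ->
     InDelta E h (x m) /\ (forall C, is_scc E C -> ~ liftC E h C (x m)) /\
     (forall y, alpha_lim E h (x m) y -> liftC E h (j (m - 1)%nat) y) /\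
     (forall y, omega_lim E h (x m) y -> liftC E h (j m) y)) ->
  ~ (forall f, liftC E h (j 0%nat) f <-> liftC E h (j l) f).
Proof.
move=> l_ge1 sccj orbits same_lift.
have j_ne m : (m <= l)%nat -> exists u, u \in j m.
  by move=> le_ml; have [/set0Pn] := sccj m le_ml.
have link m : (1 <= m)%nat -> (m <= l)%nat -> forall s u v, u \in j (m - 1)%nat -> v \in j m ->
    connect E u (x m s) /\ connect E (x m s) v.
  move=> m_ge1 le_ml; have [Dx [_ [alpha omega]]] := orbits m m_ge1 le_ml.
  by apply: connecting_orbit => //; apply: sccj; [lia | ].
have chain m : (1 <= m)%nat -> (m <= l)%nat -> forall u v, u \in j 1%nat -> v \in j m ->
    connect E u v.
  elim: m => [//|m IHm] _ le_ml u v ju jv.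
  have [m0 | m_gt0] := posnP m.
    by subst m; exact: is_scc_connect (sccj 1%nat l_ge1) ju jv.
  have [w jw] := j_ne m (ltnW le_ml).
  have [c_wx c_xv] := link m.+1 isT le_ml 0 w v ltac:(by rewrite subn1) jv.
  exact: connect_trans (IHm m_gt0 (ltnW le_ml) u w ju jw) (connect_trans c_wx c_xv).
have [f Kf] := liftC_nonempty (sccj 0%nat isT).
have j0l : j 0%nat = j l :=
  liftC_eq (sccj 0%nat isT) (sccj l (leqnn l)) Kf (proj1 (same_lift f) Kf).
have [Dx1 [not_lift _]] := orbits 1%nat (leqnn 1) l_ge1.
apply: (not_lift (j 0%nat) (sccj 0%nat isT)); split=> // s.
have [u j0u] := j_ne 0%nat isT; have [v j1v] := j_ne 1%nat l_ge1.
have [c_ux c_xv] := link 1%nat isT l_ge1 s u v j0u j1v.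
have c_vu : connect E v u by apply: (chain l l_ge1 (leqnn l) v u j1v); rewrite -j0l.
exact: is_scc_mem (sccj 0%nat isT) j0u c_ux (connect_trans c_xv c_vu).
Qed.

End MorseSets.

Theorem mainTheorem6 (V : finType) (E : rel V) (h : R) (hpos : 0 < h) :
  MorseDecomposition E h (fun C : {set V} => is_scc E C) (fun C => liftC E h C).
Proof.
split; first exact: liftC_nonempty hpos.
split.
  move=> C D sccC sccD not_same f [KCf KDf]; apply: not_same.
  by rewrite (liftC_eq sccC sccD KCf KDf).
split; first by move=> C _; apply: liftC_invariant.
split; first by move=> C _; exact (liftC_isolated E hpos C).
split; first by move=> C _; exact (compact_liftC E hpos C).
split; first exact: limit_sets_in_lifts hpos.
exact: no_cycles hpos.
Qed.
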